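(* Consider the $4$-body problem on the surface $\mathbb{M}^2$ of constant curvature $1$, with four particles on one geodesic (the real axis) with masses $m_1=m_2=1$, $m_3=m_4=m>0$, in a symmetric configuration with initial positions $z_1=-z_2=a>0$ and $z_3=-z_4=r>a$. Then there do not exist relative equilibria.
   Context: $\mathbb{M}^2$ is the complex plane with metric $ds^2=\frac{4\,dz\,d\bar z}{(1+|z|^2)^2}$; the distance satisfies $\cos d(z_k,z_j)=\frac{2(z_k\bar z_j+z_j\bar z_k)+(|z_k|^2-1)(|z_j|^2-1)}{(|z_k|^2+1)(|z_j|^2+1)}$. The curved $n$-body problem has kinetic energy $T=\frac12\sum_i m_i\frac{4|\dot z_i|^2}{(1+|z_i|^2)^2}$ and force function $U=\sum_{i<j}m_im_j\cot d(z_i,z_j)$. A relative equilibrium is a solution invariant under a one-parameter subgroup of isometries; it suffices to consider solutions $w(t)=e^{it}z$. Following earlier work, positions $z_1,\dots,z_n$ ($r_l=|z_l|$) form a relative equilibrium iff for each $i$: $\frac{(1-r_i^2)z_i}{4(1+r_i^2)^4}=-\sum_{j\ne i}\frac{m_j(r_j^2+1)^2(1+z_i\bar z_j)(z_j-z_i)}{T_{ij}^{3/2}}$, with $T_{ij}=(r_i^2+1)^2(r_j^2+1)^2-[2(z_i\bar z_j+z_j\bar z_i)+(r_i^2-1)(r_j^2-1)]^2$. Singular configurations are excluded. *)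

From HB Require Import structures.
From mathcomp Require Import all_boot all_order all_algebra.
From mathcomp Require Import complex.
Set Implicit Arguments. Unset Strict Implicit. Unset Printing Implicit Defensive.
Import Order.TTheory GRing.Theory Num.Theory.
Local Open Scope ring_scope.
Local Open Scope complex_scope.

Section Curved.
Variable R : rcfType.

Definition sqnorm (z : R[i]) : R := complex.Re z ^+ 2 + complex.Im z ^+ 2.

(* T_ij = (r_i^2+1)^2 (r_j^2+1)^2 - [2(z_i zbar_j + z_j zbar_i) + (r_i^2-1)(r_j^2-1)]^2
   (the bracket is real; we take its real part) *)
Definition Tij (zi zj : R[i]) : R :=
  (sqnorm zi + 1) ^+ 2 * (sqnorm zj + 1) ^+ 2
  - (complex.Re (2%:R * (zi * zj^* + zj * zi^*)) + (sqnorm zi - 1) * (sqnorm zj - 1)) ^+ 2.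

Definition pow32 (t : R) : R := t * Num.sqrt t.

(* A configuration is singular when some T_ij (i <> j) vanishes
   (collision or antipodal particles, i.e. sin d(z_i,z_j) = 0). *)
Definition nonsingular (n : nat) (z : 'I_n -> R[i]) : Prop :=
  forall i j : 'I_n, i != j -> Tij (z i) (z j) != 0.

(* The relative-equilibrium equations of the curved n-body problem on M^2
   (curvature 1), for the solution w(t) = e^{it} z. *)
Definition rel_eq_eqs (n : nat) (m : 'I_n -> R) (z : 'I_n -> R[i]) : Prop :=
  forall i : 'I_n,
    ((1 - sqnorm (z i))%:C * z i) / ((4%:R * (1 + sqnorm (z i)) ^+ 4)%:C)
    = - \sum_(j < n | j != i)
          ((m j * (sqnorm (z j) + 1) ^+ 2)%:C * (1 + z i * (z j)^*) * (z j - z i))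
          / (pow32 (Tij (z i) (z j)))%:C.

Definition relative_equilibrium (n : nat) (m : 'I_n -> R) (z : 'I_n -> R[i]) : Prop :=
  nonsingular z /\ rel_eq_eqs m z.

Definition masses4 (m : R) (i : 'I_4) : R :=
  match val i with 0%N | 1%N => 1 | _ => m end.

Definition config4 (a r : R) (i : 'I_4) : R[i] :=
  match val i with
  | 0%N => a%:C
  | 1%N => (- a)%:C
  | 2%N => r%:C
  | _ => (- r)%:C
  end.

End Curved.

(* Parametrize the real axis by x = tan(θ/2), θ being arc length along the geodesic.
   For a particle at x among others at y_j = tan(φ_j/2) on the axis, the equation of
   relative equilibrium reduces to the scalar balance
     sin(2θ) / 8 = - Σ_j m_j sgn(sin(φ_j - θ)) / sin²(φ_j - θ),
   whose left side is at most 1/8 in absolute value while each term on the right is at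
   least m_j in absolute value.  For the symmetric configuration it suffices to look at
   the particles at a and r.  Depending on the position of 1 relative to a, r and a r,
   either all terms of one balance have the same sign, or the two terms coming from ±r
   are compared through sin²(φ - θ) - sin²(φ + θ) = - sin(2θ) sin(2φ); in the last case,
   a < 1 < 1/a < r, the two balances have to be combined. *)

From mathcomp Require Import all_boot all_order all_algebra.
From mathcomp Require Import complex.
From mathcomp Require Import ring lra.
Import Order.TTheory GRing.Theory Num.Theory.
Local Open Scope ring_scope.
Local Open Scope complex_scope.

Section AxialConfigurations.
Context {R : rcfType}.
Implicit Types x y : R.

(* With x = tan(θ/2) and y = tan(φ/2): sin(φ - θ) = 2 signed_sin x y / ((1 + x²)(1 + y²)),
   csc2 x y = 1 / sin²(φ - θ) (and 0 when the sine vanishes), centrifugal x = sin(2θ) / 8. *)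
Definition signed_sin x y := (y - x) * (1 + x * y).
Definition csc2 x y := (1 + x ^+ 2) ^+ 2 * (1 + y ^+ 2) ^+ 2 / (4 * signed_sin x y ^+ 2).
Definition centrifugal x := x * (1 - x ^+ 2) / (2 * (1 + x ^+ 2) ^+ 2).

Lemma one_add_sqr_neq0 x : 1 + x ^+ 2 != 0.
Proof. by rewrite paddr_eq0 ?sqr_ge0 // oner_eq0. Qed.

Lemma csc2_ge1 {x y} : signed_sin x y != 0 -> 1 <= csc2 x y.
Proof.
move=> s0; rewrite /csc2 ler_pdivlMr ?mul1r; last by rewrite mulr_gt0 // exprn_even_gt0.
have -> : (1 + x ^+ 2) ^+ 2 * (1 + y ^+ 2) ^+ 2
    = 4 * signed_sin x y ^+ 2 + ((y - x) ^+ 2 - (1 + x * y) ^+ 2) ^+ 2.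
  by rewrite /signed_sin; ring.
by rewrite lerDl sqr_ge0.
Qed.

Lemma csc2_ge0 x y : 0 <= csc2 x y.
Proof. by apply: divr_ge0; apply: mulr_ge0; rewrite ?sqr_ge0. Qed.

Lemma csc2C x y : csc2 y x = csc2 x y.
Proof. by rewrite /csc2 /signed_sin; congr (_ / _); ring. Qed.

Lemma csc2_oppC x y : csc2 x (- y) = csc2 y (- x).
Proof. by rewrite /csc2 /signed_sin; congr (_ / _); ring. Qed.

Lemma centrifugal_bound x : - 8^-1 <= centrifugal x <= 8^-1.
Proof.
have c0 : 0 < 2 * (1 + x ^+ 2) ^+ 2.
  by rewrite mulr_gt0 // exprn_even_gt0 // one_add_sqr_neq0.
have := sqr_ge0 (1 - x ^+ 2 + 2 * x); have := sqr_ge0 (1 - x ^+ 2 - 2 * x).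
by rewrite /centrifugal ler_pdivlMr // ler_pdivrMr // => *; apply/andP; split; nra.
Qed.

Lemma centrifugal_gt0 x : 0 < x < 1 -> 0 < centrifugal x.
Proof.
case/andP=> x0 x1; rewrite /centrifugal divr_gt0 //; first by rewrite mulr_gt0 //; nra.
by rewrite mulr_gt0 // exprn_even_gt0 // one_add_sqr_neq0.
Qed.

Lemma centrifugal_lt0 {x} : 1 < x -> centrifugal x < 0.
Proof.
move=> x1; rewrite /centrifugal -oppr_gt0 -mulNr divr_gt0 //; first by nra.
by rewrite mulr_gt0 // exprn_even_gt0 // one_add_sqr_neq0.
Qed.

Lemma csc2_opp {x} : signed_sin x (- x) != 0 -> csc2 x (- x) * (8 * centrifugal x) ^+ 2 = 1.
Proof.
rewrite /csc2 /centrifugal /signed_sin mulf_eq0 negb_or => /andP[x0 x1].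
have x2 := one_add_sqr_neq0 x.
by field; rewrite x0 x1 x2.
Qed.

Lemma csc2_oppr_sub {x y} : signed_sin x y != 0 -> signed_sin x (- y) != 0 ->
  csc2 x (- y) - csc2 x y = - 64 * csc2 x y * csc2 x (- y) * centrifugal x * centrifugal y.
Proof.
rewrite /csc2 /centrifugal /signed_sin !mulf_eq0 !negb_or => /andP[s1 s2] /andP[s3 s4].
have x2 := one_add_sqr_neq0 x; have y2 := one_add_sqr_neq0 y.
by field; rewrite s1 s2 s3 s4 x2 y2.
Qed.

Lemma signed_sinC x y : signed_sin y x = - signed_sin x y.
Proof. by rewrite /signed_sin; ring. Qed.

Lemma signed_sin_gt0 x y : 0 <= x -> x < y -> 0 < signed_sin x y.
Proof. by move=> x0 xy; rewrite /signed_sin mulr_gt0 ?subr_gt0 //; nra. Qed.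

Lemma sg_signed_sin_oppr x y : 0 < x -> 0 < y ->
  Num.sg (signed_sin x (- y)) = Num.sg (x * y - 1).
Proof.
move=> x0 y0; have -> : signed_sin x (- y) = (x + y) * (x * y - 1) by rewrite /signed_sin; ring.
by rewrite sgrM gtr0_sg ?addr_gt0 // mul1r.
Qed.

Lemma signed_sin_oppr_eq0 x y : 0 < x -> 0 < y -> (signed_sin x (- y) == 0) = (x * y == 1).
Proof. by move=> x0 y0; rewrite -sgr_eq0 sg_signed_sin_oppr // sgr_eq0 subr_eq0. Qed.

Lemma csc2_oppr_ge1 x y : 0 < x -> 0 < y -> x * y != 1 -> 1 <= csc2 x (- y).
Proof. by move=> x0 y0 xy; rewrite csc2_ge1 // signed_sin_oppr_eq0. Qed.

Lemma sqnorm_real x : sqnorm x%:C = x ^+ 2.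
Proof. by rewrite /sqnorm /= expr0n addr0. Qed.

Lemma conj_real x : Num.conj x%:C = x%:C.
Proof. exact: conjc_real. Qed.

Lemma Tij_real x y : Tij x%:C y%:C = 4 * signed_sin x y ^+ 2.
Proof.
rewrite /Tij !conj_real !sqnorm_real -!rmorphM -rmorphD -[2](rmorph_nat (real_complex R)) -rmorphM /=.
by rewrite /signed_sin; ring.
Qed.

Lemma pow32_sqr (t : R) : pow32 (4 * t ^+ 2) = 8 * t ^+ 2 * `|t|.
Proof.
rewrite /pow32 (_ : 4 * t ^+ 2 = (2 * t) ^+ 2); last by ring.
by rewrite sqrtr_sqr normrM ger0_norm //; ring.
Qed.

Lemma force_real x y : signed_sin x y != 0 ->
  (1 + y ^+ 2) ^+ 2 * (1 + x * y) * (y - x) / pow32 (Tij x%:C y%:C)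
  = Num.sg (signed_sin x y) * csc2 x y / (2 * (1 + x ^+ 2) ^+ 2).
Proof.
move=> s0; have sg0 : Num.sg (signed_sin x y) != 0 by rewrite sgr_eq0.
have x0 := one_add_sqr_neq0 x.
rewrite Tij_real pow32_sqr normrEsg -[in RHS]invr_sg /csc2.
move: s0 sg0; rewrite /signed_sin mulf_eq0 negb_or => /andP[yx xy] sg0.
by field; rewrite x0 xy yx sg0.
Qed.

Lemma rel_eq_term_real (mj : R) {x y} : signed_sin x y != 0 ->
  ((mj * (sqnorm y%:C + 1) ^+ 2)%:C * (1 + x%:C * Num.conj y%:C) * (y%:C - x%:C))
    / (pow32 (Tij x%:C y%:C))%:C
  = (mj * (Num.sg (signed_sin x y) * csc2 x y) / (2 * (1 + x ^+ 2) ^+ 2))%:C.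
Proof.
move=> s0; rewrite -[in RHS]mulrA -force_real // sqnorm_real conj_real.
by rewrite !(rmorphM, rmorphD, rmorphB, rmorphXn, rmorph1, fmorphV) /=; ring.
Qed.

Lemma rel_eq_lhs_real x :
  ((1 - sqnorm x%:C)%:C * x%:C) / ((4 * (1 + sqnorm x%:C) ^+ 4)%:C)
  = (centrifugal x / (2 * (1 + x ^+ 2) ^+ 2))%:C.
Proof.
rewrite sqnorm_real -fmorphV -!rmorphM; congr (_%:C).
by rewrite /centrifugal; field; rewrite one_add_sqr_neq0.
Qed.

Section RealConfiguration.
Context {n : nat} {m : 'I_n -> R} {z : 'I_n -> R[i]} {x : 'I_n -> R}.
Hypothesis zE : forall i, z i = (x i)%:C.

Lemma nonsingular_real : nonsingular z ->
  forall i j, i != j -> signed_sin (x i) (x j) != 0.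
Proof.
move=> ns i j /ns; rewrite !zE Tij_real.
by apply: contra => /eqP->; rewrite expr0n mulr0.
Qed.

Lemma rel_eq_eqs_real : nonsingular z -> rel_eq_eqs m z ->
  forall i, centrifugal (x i)
    = - \sum_(j < n | j != i) m j * (Num.sg (signed_sin (x i) (x j)) * csc2 (x i) (x j)).
Proof.
move=> ns eqs i; have := eqs i; rewrite zE rel_eq_lhs_real.
have ns_i j : j != i -> signed_sin (x i) (x j) != 0.
  by rewrite eq_sym; exact: nonsingular_real.
under eq_bigr => j ji do rewrite zE (rel_eq_term_real _ (ns_i j ji)).
rewrite -rmorph_sum -rmorphN -mulr_suml -mulNr => /complexI/(congr1 ( *%R^~ (2 * (1 + x i ^+ 2) ^+ 2))).
by rewrite !divfK // mulf_neq0 ?pnatr_eq0 ?expf_neq0 ?one_add_sqr_neq0.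
Qed.

End RealConfiguration.

(* The equations at a and at r once the signs of the sines are evaluated using 0 < a < r;
   those at -a and -r are their mirror images. *)
Definition axial_balance (a r m : R) : Prop :=
  centrifugal a = - (Num.sg (a * a - 1) * csc2 a (- a) + m * csc2 a r
                     + m * (Num.sg (a * r - 1) * csc2 a (- r)))
  /\ centrifugal r = csc2 a r - Num.sg (a * r - 1) * csc2 a (- r)
                     - m * (Num.sg (r * r - 1) * csc2 r (- r)).

Section SymmetricConfiguration.
Context {a r m : R}.
Hypotheses (a_gt0 : 0 < a) (a_lt_r : a < r).

Let r_gt0 : 0 < r. Proof. exact: lt_trans a_gt0 a_lt_r. Qed.

Lemma config4_real i : config4 a r i = (complex.Re (config4 a r i))%:C.
Proof. by case: i => [[|[|[|k]]] ?]. Qed.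

Let sar : 0 < signed_sin a r. Proof. by rewrite signed_sin_gt0 ?ltW. Qed.

Lemma config4_nonsingular : nonsingular (config4 a r) -> [/\ a != 1, r != 1 & a * r != 1].
Proof.
move=> /(nonsingular_real config4_real) ns.
have := ns ord0 (@Ordinal 4 1 isT) isT; have := ns (@Ordinal 4 2 isT) (@Ordinal 4 3 isT) isT.
have := ns ord0 (@Ordinal 4 3 isT) isT.
rewrite /= !signed_sin_oppr_eq0 // => ar rr aa.
by split=> //; [move: aa | move: rr]; apply: contraNneq => ->; rewrite mulr1.
Qed.

Lemma config4_balance : relative_equilibrium (masses4 m) (config4 a r) -> axial_balance a r m.
Proof.
case=> ns /(rel_eq_eqs_real config4_real ns) E; split.
- have := E ord0; rewrite big_mkcond /= !big_ord_recl big_ord0 /=.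
  rewrite /masses4 /= !sg_signed_sin_oppr // (gtr0_sg sar) => ->.
  ring.
- have := E (@Ordinal 4 2 isT); rewrite big_mkcond /= !big_ord_recl big_ord0 /=.
  rewrite /masses4 /= !sg_signed_sin_oppr // signed_sinC sgrN (gtr0_sg sar).
  rewrite csc2C (csc2_oppC r) (mulrC r) => ->.
  ring.
Qed.

End SymmetricConfiguration.

(* The balance at r forces 64 K J sa < 1 and thus bounds m; the balance at a then gives
   M <= sa + 1 / (1024 sa), which is incompatible with M = 1 / (64 sa²) and sa <= 1/8. *)
Lemma straddling_balance_absurd {m sa sr K J M N : R} :
  0 < m -> 0 < sa <= 8^-1 -> - 8^-1 <= sr < 0 -> 1 <= K -> 1 <= J -> 1 <= N ->
  M * (8 * sa) ^+ 2 = 1 -> J - K = - 64 * K * J * sa * sr ->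
  m * (K + J) = M - sa -> m * N = K - J - sr -> False.
Proof.
move=> m0 /andP[sa0 sa8] /andP[sr8 sr0] K1 J1 N1 hM JK EM EN.
have mN : m * N = - sr * (1 - 64 * K * J * sa) by lra.
have X0 : 0 <= 1 - 64 * K * J * sa by nra.
have m_le : m <= (1 - 64 * K * J * sa) / 8 by nra.
have KJ : K + J <= 2 * K * J by nra.
have m_le2 : m <= (1 - 32 * (K + J) * sa) / 8 by nra.
have key : 8 * sa * (M - sa) <= 128^-1.
  by rewrite -EM; have := sqr_ge0 (sa * (K + J) - 64^-1); nra.
have M8 : 1 <= 8 * sa * M by nra.
nra.
Qed.

Section NoBalance.
Context {a r m : R}.
Hypothesis balance : axial_balance a r m.

Lemma no_balance_a_gt1 : 0 < m -> 1 < a -> a < r -> False.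
Proof.
move=> m0 a1 ar; have a0 : 0 < a := lt_trans ltr01 a1.
have aa : 0 < a * a - 1 by nra.
have a_r : 0 < a * r - 1 by nra.
case: balance => Ea _; rewrite (gtr0_sg aa) (gtr0_sg a_r) !mul1r in Ea.
have M1 : 1 <= csc2 a (- a) by rewrite csc2_oppr_ge1 // gt_eqF // -subr_gt0.
have mK := mulr_ge0 (ltW m0) (csc2_ge0 a r).
have mJ := mulr_ge0 (ltW m0) (csc2_ge0 a (- r)).
have /andP[lo _] := centrifugal_bound a.
lra.
Qed.

Lemma no_balance_r_lt1 : 0 < m -> 0 < a -> a < r -> r < 1 -> False.
Proof.
move=> m0 a0 ar r1; have rr : r * r - 1 < 0 by nra.
have a_r : a * r - 1 < 0 by nra.
case: balance => _ Er; rewrite (ltr0_sg rr) (ltr0_sg a_r) in Er.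
have K1 : 1 <= csc2 a r by rewrite csc2_ge1 // lt0r_neq0 // signed_sin_gt0 ?ltW.
have mN := mulr_ge0 (ltW m0) (csc2_ge0 r (- r)).
have J0 := csc2_ge0 a (- r).
have /andP[_ hi] := centrifugal_bound r.
lra.
Qed.

Lemma no_balance_ar_lt1 : 0 < m -> 0 < a -> a < 1 -> 1 < r -> a * r < 1 -> False.
Proof.
move=> m0 a0 a1 r1 ar1; have r0 : 0 < r := lt_trans ltr01 r1.
have aa : a * a - 1 < 0 by nra.
have a_r : a * r - 1 < 0 by rewrite subr_lt0.
case: balance => Ea _; rewrite (ltr0_sg aa) (ltr0_sg a_r) in Ea.
have M1 : 1 <= csc2 a (- a) by rewrite csc2_oppr_ge1 // lt_eqF // -subr_lt0.
have sK : signed_sin a r != 0 by rewrite lt0r_neq0 // signed_sin_gt0 ?ltW // (lt_trans a1).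
have sJ : signed_sin a (- r) != 0 by rewrite signed_sin_oppr_eq0 // lt_eqF.
have JK := csc2_oppr_sub sK sJ.
have KJ0 : 0 < csc2 a r * csc2 a (- r) by rewrite mulr_gt0 // (lt_le_trans ltr01) ?csc2_ge1.
have Sa : 0 < centrifugal a by rewrite centrifugal_gt0 // a0 a1.
have Sr := centrifugal_lt0 r1.
have JK0 : 0 < csc2 a (- r) - csc2 a r.
  by rewrite JK; have := mulr_gt0 KJ0 Sa; nra.
have mJK := mulr_ge0 (ltW m0) (ltW JK0).
have /andP[_ hi] := centrifugal_bound a.
lra.
Qed.

Lemma no_balance_ar_gt1 : 0 < m -> 0 < a -> a < 1 -> 1 < r -> 1 < a * r -> False.
Proof.
move=> m0 a0 a1 r1 ar1; have r0 : 0 < r := lt_trans ltr01 r1.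
have aa : a * a - 1 < 0 by nra.
have rr : 0 < r * r - 1 by nra.
have a_r : 0 < a * r - 1 by rewrite subr_gt0.
case: balance => Ea Er.
rewrite (ltr0_sg aa) (gtr0_sg a_r) in Ea; rewrite (gtr0_sg a_r) (gtr0_sg rr) in Er.
have sM : signed_sin a (- a) != 0 by rewrite signed_sin_oppr_eq0 // lt_eqF // -subr_lt0.
have sK : signed_sin a r != 0 by rewrite lt0r_neq0 // signed_sin_gt0 ?ltW // (lt_trans a1).
have sJ : signed_sin a (- r) != 0 by rewrite signed_sin_oppr_eq0 // gt_eqF.
have sN : signed_sin r (- r) != 0 by rewrite signed_sin_oppr_eq0 // gt_eqF // -subr_gt0.
have /andP[_ Sa8] := centrifugal_bound a; have /andP[Sr8 _] := centrifugal_bound r.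
apply: (straddling_balance_absurd m0 _ _ (csc2_ge1 sK) (csc2_ge1 sJ) (csc2_ge1 sN)
          (csc2_opp sM) (csc2_oppr_sub sK sJ)).
- by rewrite centrifugal_gt0 ?a0.
- by rewrite centrifugal_lt0 ?Sr8.
- by rewrite Ea; ring.
- by rewrite Er; ring.
Qed.

Lemma no_axial_balance :
  0 < m -> 0 < a -> a < r -> a != 1 -> r != 1 -> a * r != 1 -> False.
Proof.
move=> m0 a0 ar; rewrite !neq_lt => /orP[a1|a1] /orP[r1|r1] /orP[ar1|ar1];
  by [exact: no_balance_r_lt1 | exact: no_balance_ar_lt1 | exact: no_balance_ar_gt1
     | exact: no_balance_a_gt1].
Qed.

End NoBalance.

End AxialConfigurations.

Theorem corollary1 (R : rcfType) (a r m : R) :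
  0 < a -> a < r -> 0 < m ->
  ~ relative_equilibrium (masses4 m) (config4 a r).
Proof.
move=> a0 ar m0 req.
have [a1 r1 ar1] := config4_nonsingular a0 ar req.1.
exact: no_axial_balance (config4_balance a0 ar req) m0 a0 ar a1 r1 ar1.
Qed.
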